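(* Suppose A1 and A3 hold and let $\{x_k\}$ be generated by Algorithm 1. Let $N_k=\sum_{j=0}^{k}(l_j+1)$ be the total number of evaluations of $f$ at trial points $x_j+\alpha_j\beta^l d_j$ performed in iterations $0,\dots,k$. Then $$N_k\le 2(k+1)+\frac{1}{\log\beta}\left[\log\bar\alpha-\log\alpha_0\right],$$ where $\bar\alpha=\min\{\alpha_0,\,2(1-\rho)c_1/(Lc_2^2)\}$.
   Context: Let $(X,\langle\cdot,\cdot\rangle)$ be a real Hilbert space with induced norm $\|\cdot\|$, and $f:X\to\mathbb{R}$ Fréchet differentiable with gradient $\nabla f$. Algorithm 1 (general non-monotone descent algorithm): parameters $x_0\in X$, $\alpha_0>0$, $\beta,\rho\in(0,1)$. For $k=0,1,2,\dots$: choose $d_k\in X$ with $\langle\nabla f(x_k),d_k\rangle<0$; then for $l=0,1,2,\dots$ choose a number $\nu_{k,l}\ge 0$ and test $$f(x_k+\alpha_k\beta^l d_k)\le f(x_k)+\rho\alpha_k\beta^l\langle\nabla f(x_k),d_k\rangle+\nu_{k,l};$$ let $l_k$ be the first $l$ for which this holds, set $\nu_k:=\nu_{k,l_k}$, $x_{k+1}=x_k+\alpha_k\beta^{l_k}d_k$ and $\alpha_{k+1}=\alpha_k\beta^{l_k-1}$. It is assumed the algorithm generates infinite sequences (all $l_k$ finite). Assumptions: A1: $\nabla f$ is Lipschitz continuous with constant $L>0$. A3: there are constants $c_1,c_2>0$ with $\langle\nabla f(x_k),d_k\rangle\le -c_1\|\nabla f(x_k)\|^2$ and $\|d_k\|\le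 c_2\|\nabla f(x_k)\|$ for all $k$. *)

From Stdlib Require Export Reals Lra Lia ZArith.
Open Scope R_scope.

Record Hilbert := {
  hcar :> Type;
  hzero : hcar;
  hadd : hcar -> hcar -> hcar;
  hopp : hcar -> hcar;
  hscal : R -> hcar -> hcar;
  hinner : hcar -> hcar -> R;
  hadd_assoc : forall x y z, hadd x (hadd y z) = hadd (hadd x y) z;
  hadd_comm : forall x y, hadd x y = hadd y x;
  hadd_zero : forall x, hadd x hzero = x;
  hadd_opp : forall x, hadd x (hopp x) = hzero;
  hscal_assoc : forall a b x, hscal a (hscal b x) = hscal (a * b) x;
  hscal_one : forall x, hscal 1 x = x;
  hscal_distr_l : forall a x y, hscal a (hadd x y) = hadd (hscal a x) (hscal a y);
  hscal_distr_r : forall a b x, hscal (a + b) x = hadd (hscal a x) (hscal b x);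
  hinner_sym : forall x y, hinner x y = hinner y x;
  hinner_add_l : forall x y z, hinner (hadd x y) z = hinner x z + hinner y z;
  hinner_scal_l : forall a x y, hinner (hscal a x) y = a * hinner x y;
  hinner_pos : forall x, 0 <= hinner x x;
  hinner_def : forall x, hinner x x = 0 -> x = hzero;
  hcomplete : forall u : nat -> hcar,
    (forall eps, 0 < eps -> exists N, forall m n, (N <= m)%nat -> (N <= n)%nat ->
        sqrt (hinner (hadd (u m) (hopp (u n))) (hadd (u m) (hopp (u n)))) < eps) ->
    exists lim, forall eps, 0 < eps -> exists N, forall n, (N <= n)%nat ->
        sqrt (hinner (hadd (u n) (hopp lim)) (hadd (u n) (hopp lim))) < eps
}.

Arguments hzero {h}.
Arguments hadd {h}.
Arguments hopp {h}.
Arguments hscal {h}.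
Arguments hinner {h}.

Definition hnorm {X : Hilbert} (x : X) : R := sqrt (hinner x x).
Definition hsub {X : Hilbert} (x y : X) : X := hadd x (hopp y).

Definition is_gradient {X : Hilbert} (f : X -> R) (g : X -> X) : Prop :=
  forall x : X, forall eps, 0 < eps -> exists delta, 0 < delta /\
    forall h : X, hnorm h < delta ->
      Rabs (f (hadd x h) - f x - hinner (g x) h) <= eps * hnorm h.

Definition lipschitz {X : Hilbert} (g : X -> X) (L : R) : Prop :=
  0 < L /\ forall x y : X, hnorm (hsub (g x) (g y)) <= L * hnorm (hsub x y).

(* Backtracking from [alpha k] stops as soon as the trial step drops below
   [2 (1 - rho) c1 / (L c2^2)], because by the descent lemma every such step
   satisfies the Armijo condition under A3.  Hence each trial step size stays
   above [abar], while [alpha (k+1) = alpha k beta^(l k - 1)] gives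
   [ln alpha (k+1) = ln alpha0 + (N_k - 2 (k+1)) ln beta]; comparing with
   [ln abar] and dividing by [ln beta < 0] yields the bound. *)

From Stdlib Require Import Reals Lra Lia ZArith ssreflect.
From Coquelicot Require Import Coquelicot.
Open Scope R_scope.

Section InnerProduct.

Variable X : Hilbert.
Implicit Types (u v w : X).

Lemma hinner0l v : hinner hzero v = 0.
Proof. have := hinner_add_l X hzero hzero v; rewrite hadd_zero; lra. Qed.

Lemma hinnerNl u v : hinner (hopp u) v = - hinner u v.
Proof. have := hinner_add_l X u (hopp u) v; rewrite hadd_opp hinner0l; lra. Qed.

Lemma hinnerDr u v w : hinner u (hadd v w) = hinner u v + hinner u w.
Proof. by rewrite hinner_sym hinner_add_l !(hinner_sym _ _ u). Qed.

Lemma hinnerZr a u v : hinner u (hscal a v) = a * hinner u v.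
Proof. by rewrite hinner_sym hinner_scal_l (hinner_sym _ v). Qed.

Lemma hscal0 v : hscal 0 v = hzero.
Proof. by apply: hinner_def; rewrite hinner_scal_l Rmult_0_l. Qed.

Lemma haddKl u v : hsub (hadd u v) u = v.
Proof. by rewrite /hsub (hadd_comm X u v) -hadd_assoc hadd_opp hadd_zero. Qed.

Lemma hnorm_ge0 u : 0 <= hnorm u.
Proof. exact: sqrt_pos. Qed.

Lemma hnorm_sqr u : hnorm u * hnorm u = hinner u u.
Proof. exact/sqrt_sqrt/hinner_pos. Qed.

Lemma hnorm_eq0 u : hnorm u = 0 -> u = hzero.
Proof. by move=> /sqrt_eq_0 h; apply/hinner_def/h/hinner_pos. Qed.

Lemma hnorm_scal a u : hnorm (hscal a u) = Rabs a * hnorm u.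
Proof.
rewrite /hnorm hinner_scal_l hinnerZr -Rmult_assoc sqrt_mult ?sqrt_Rsqr_abs //.
- exact: Rle_0_sqr.
- exact: hinner_pos.
Qed.

Lemma hinner_add_scal u v r :
  hinner (hadd u (hscal r v)) (hadd u (hscal r v))
  = hinner u u + 2 * r * hinner u v + r * r * hinner v v.
Proof.
by rewrite !hinner_add_l !hinnerDr !hinner_scal_l !hinnerZr (hinner_sym _ v u); ring.
Qed.

Lemma hinner_le_norm u v : hinner u v <= hnorm u * hnorm v.
Proof.
have hu := hnorm_ge0 u; have hv := hnorm_ge0 v.
have [/hnorm_eq0 ->|nu] := Req_dec (hnorm u) 0.
  by rewrite hinner0l; apply/Rmult_le_pos/hv/hnorm_ge0.
have [/hnorm_eq0 ->|nv] := Req_dec (hnorm v) 0.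
  by rewrite hinner_sym hinner0l; apply/Rmult_le_pos/hnorm_ge0.
(* expand [0 <= |u - (|u|/|v|) v|^2] *)
have := hinner_pos X (hadd u (hscal (- (hnorm u / hnorm v)) v)).
rewrite hinner_add_scal -!hnorm_sqr.
have -> : - (hnorm u / hnorm v) * - (hnorm u / hnorm v) * (hnorm v * hnorm v)
          = hnorm u * hnorm u by field.
have -> : 2 * - (hnorm u / hnorm v) * hinner u v
          = - (2 * hnorm u / hnorm v) * hinner u v by field.
move=> h; have : hnorm u / hnorm v * hinner u v <= hnorm u / hnorm v * (hnorm u * hnorm v).
{ have -> : hnorm u / hnorm v * (hnorm u * hnorm v) = hnorm u * hnorm u by field. lra. }
apply: Rmult_le_reg_l; apply: Rdiv_lt_0_compat; lra.
Qed.

End InnerProduct.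

Section SmoothObjective.

Variables (X : Hilbert) (f : X -> R) (g : X -> X).
Hypothesis Hgrad : is_gradient f g.

Lemma derivable_pt_lim_along (x d : X) s :
  derivable_pt_lim (fun s => f (hadd x (hscal s d))) s (hinner (g (hadd x (hscal s d))) d).
Proof.
move=> eps Heps.
set y := hadd x (hscal s d); set nd := hnorm d; have hnd : 0 <= nd := hnorm_ge0 X d.
have heps' : 0 < eps / (2 * (nd + 1)) by apply: Rdiv_lt_0_compat; lra.
have [delta [Hdelta Hy]] := Hgrad y _ heps'.
have hdp : 0 < delta / (nd + 1) by apply: Rdiv_lt_0_compat; lra.
exists (mkposreal _ hdp) => h /= hne hlt.
have hh : 0 < Rabs h by apply: Rabs_pos_lt.
have hsmall : Rabs h * nd < delta.
{ have : Rabs h * (nd + 1) < delta by move: hlt; rewrite /Rdiv -Rlt_div_r /=; lra.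
  nra. }
have := Hy (hscal h d); rewrite hnorm_scal -/nd -hadd_assoc -hscal_distr_r hinnerZr.
move/(_ hsmall) => hquot.
rewrite -/y /Rdiv.
have -> : (f (hadd x (hscal (s + h) d)) - f y) * / h - hinner (g y) d
          = (f (hadd x (hscal (s + h) d)) - f y - h * hinner (g y) d) * / h by field.
rewrite Rabs_mult Rabs_inv.
apply: (Rle_lt_trans _ (eps / (2 * (nd + 1)) * nd)).
- apply: (Rmult_le_reg_r (Rabs h)) => //.
  rewrite Rmult_assoc Rinv_l; nra.
- have : eps / (2 * (nd + 1)) * (nd + 1) = eps / 2 by field; lra.
  nra.
Qed.

Variable L : R.
Hypothesis HL : lipschitz g L.

Lemma descent_lemma (x d : X) t : 0 < t ->
  f (hadd x (hscal t d)) <= f x + t * hinner (g x) d + L / 2 * t ^ 2 * hnorm d ^ 2.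
Proof.
move=> ht; have [HL0 HLip] := HL.
set c := hinner (g x) d; set K := L / 2 * hnorm d ^ 2.
(* [psi] is nonincreasing on [0, t] since its derivative [psi'] is <= 0 there *)
set psi := fun s => f (hadd x (hscal s d)) - (c * s + K * (s * s)).
set psi' := fun s => hinner (g (hadd x (hscal s d))) d - (c + K * (2 * s)).
have [z [Hz [hz0 hzt]]] : exists z, psi t - psi 0 = psi' z * (t - 0) /\ 0 < z < t.
{ apply: MVT_cor2 => // z _.
  apply: (derivable_pt_lim_minus (fun s => f (hadd x (hscal s d)))).
  - exact: derivable_pt_lim_along.
  - by apply/is_derive_Reals; auto_derive; last ring. }
have Hpsi' : psi' z <= 0.
{ set y := hadd x (hscal z d).
  have hnd := hnorm_ge0 X d.
  have hcs := hinner_le_norm X (hsub (g y) (g x)) d.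
  have hlip := HLip y x; rewrite haddKl hnorm_scal Rabs_pos_eq in hlip; last lra.
  have e : hinner (g y) d - c = hinner (hsub (g y) (g x)) d
    by rewrite /hsub hinner_add_l hinnerNl.
  have : hnorm (hsub (g y) (g x)) * hnorm d <= L * (z * hnorm d) * hnorm d
    by apply: Rmult_le_compat_r.
  have : K * (2 * z) = L * (z * hnorm d) * hnorm d by rewrite /K /=; field.
  rewrite /psi' -/y; lra. }
have : psi' z * (t - 0) <= 0 by apply: Rmult_le_0_r; lra.
rewrite -Hz /psi /= hscal0 hadd_zero.
have : K * (t * t) = L / 2 * t ^ 2 * hnorm d ^ 2 by rewrite /K /=; field.
lra.
Qed.

Lemma armijo_small_step c1 c2 rho (x d : X) t nu :
  0 < c1 -> 0 < c2 -> rho < 1 -> 0 <= nu ->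
  hinner (g x) d <= - c1 * hnorm (g x) ^ 2 ->
  hnorm d <= c2 * hnorm (g x) ->
  0 < t -> t <= 2 * (1 - rho) * c1 / (L * c2 ^ 2) ->
  f (hadd x (hscal t d)) <= f x + rho * t * hinner (g x) d + nu.
Proof.
move=> hc1 hc2 hrho hnu hA3a hA3b ht htA.
have hdesc := descent_lemma x d t ht; have [hL _] := HL.
set c := hinner (g x) d in hA3a hdesc *.
set ng := hnorm (g x) in hA3a hA3b; set nd := hnorm d in hA3b hdesc.
have hnd : 0 <= nd := hnorm_ge0 X d.
have hLc : 0 < L * c2 ^ 2 by apply: Rmult_lt_0_compat; [lra | apply: pow_lt].
have htL : t * (L * c2 ^ 2) <= 2 * (1 - rho) * c1
  by move: htA; rewrite -Rle_div_r.
(* the quadratic term is dominated by a [1 - rho] fraction of the linear one *)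
have hquad : L / 2 * t * nd ^ 2 <= (1 - rho) * c1 * ng ^ 2.
{ have hnd2 : nd ^ 2 <= c2 ^ 2 * ng ^ 2 by rewrite -Rpow_mult_distr; apply: pow_incr; lra.
  have hng2 : 0 <= ng ^ 2 := pow2_ge_0 ng.
  apply: (Rle_trans _ (L / 2 * t * (c2 ^ 2 * ng ^ 2))).
  - apply: Rmult_le_compat_l => //; apply: Rmult_le_pos; lra.
  - have -> : L / 2 * t * (c2 ^ 2 * ng ^ 2) = t * (L * c2 ^ 2) / 2 * ng ^ 2 by field.
    apply: Rmult_le_compat_r; lra. }
have : t * ((1 - rho) * c + L / 2 * t * nd ^ 2) <= 0.
{ apply: Rmult_le_0_l; first lra.
  have : 0 <= (1 - rho) * (- c1 * ng ^ 2 - c) by apply: Rmult_le_pos; lra.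
  lra. }
have : L / 2 * t ^ 2 * nd ^ 2 = t * (L / 2 * t * nd ^ 2) by ring.
nra.
Qed.

End SmoothObjective.

Lemma powerRZ_pred_nat b n : b <> 0 ->
  powerRZ b (Z.of_nat n - 1) = b ^ n * / b.
Proof. by move=> hb; rewrite powerRZ_add // pow_powerRZ /= Rmult_1_r. Qed.

Section Backtracking.

Variables (beta : R) (alpha : nat -> R) (l : nat -> nat).
Hypothesis Hbeta : 0 < beta < 1.
Hypothesis Halpha0_pos : 0 < alpha 0%nat.
Hypothesis Halpha : forall k, alpha (S k) = alpha k * powerRZ beta (Z.of_nat (l k) - 1).

Lemma alpha_S k : alpha (S k) = alpha k * beta ^ l k * / beta.
Proof. by rewrite Halpha powerRZ_pred_nat ?Rmult_assoc //; lra. Qed.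

Lemma alpha_pos k : 0 < alpha k.
Proof.
elim: k => [|k IH] //; rewrite alpha_S.
apply: Rmult_lt_0_compat; last by apply: Rinv_0_lt_compat; lra.
by apply: Rmult_lt_0_compat => //; apply: pow_lt; lra.
Qed.

Lemma ln_alpha_S k : ln (alpha (S k)) = ln (alpha k) + (INR (l k) - 1) * ln beta.
Proof.
have hb : 0 < beta by lra.
have hk := alpha_pos k; have hbl := pow_lt beta (l k) hb.
have hkl : 0 < alpha k * beta ^ l k by apply: Rmult_lt_0_compat.
have hbi : 0 < / beta by apply: Rinv_0_lt_compat.
by rewrite alpha_S !ln_mult // ln_Rinv // ln_pow //; ring.
Qed.

Lemma alpha_ge_min (A : R) :
  (forall k j, (j < l k)%nat -> A < alpha k * beta ^ j) ->
  forall k, Rmin (alpha 0%nat) A <= alpha k.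
Proof.
move=> Hrej; elim=> [|k IH]; first exact: Rmin_l.
have hb : 0 < beta by lra.
have hk := alpha_pos k.
rewrite alpha_S; case El: (l k) => [|m] /=.
- (* no backtracking: the trial step is enlarged by [1 / beta > 1] *)
  have : alpha k <= alpha k * 1 * / beta.
  { rewrite Rmult_1_r -{1}(Rmult_1_r (alpha k)); apply: Rmult_le_compat_l; first lra.
    rewrite -Rinv_1; apply: Rinv_le_contravar; lra. }
  lra.
- (* the rejected step [alpha k * beta ^ m] is the new trial step *)
  have -> : alpha k * (beta * beta ^ m) * / beta = alpha k * beta ^ m by field; lra.
  have := Hrej k m ltac:(lia); have := Rmin_r (alpha 0%nat) A; lra.
Qed.

Lemma trials_mul_ln_beta k :
  sum_f_R0 (fun j => INR (l j + 1)) k * ln beta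
  = 2 * (INR k + 1) * ln beta + ln (alpha (S k)) - ln (alpha 0%nat).
Proof.
elim: k => [|k IH].
- rewrite /= ln_alpha_S plus_INR /=; ring.
- rewrite tech5 Rmult_plus_distr_r IH (ln_alpha_S (S k)) plus_INR (S_INR k).
  change (INR 1) with 1; ring.
Qed.

Lemma trials_bound (A : R) : 0 < A ->
  (forall k j, (j < l k)%nat -> A < alpha k * beta ^ j) ->
  forall k, sum_f_R0 (fun j => INR (l j + 1)) k
    <= 2 * (INR k + 1) + / ln beta * (ln (Rmin (alpha 0%nat) A) - ln (alpha 0%nat)).
Proof.
move=> hA Hrej k.
have hlb : ln beta < 0 by rewrite -ln_1; apply: ln_increasing; lra.
have hmin : 0 < Rmin (alpha 0%nat) A by apply: Rmin_pos.
have hle : ln (Rmin (alpha 0%nat) A) <= ln (alpha (S k)).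
{ case: (Rle_lt_or_eq_dec _ _ (alpha_ge_min A Hrej (S k))) => [h|->]; last lra.
  by left; apply: ln_increasing. }
have -> : sum_f_R0 (fun j => INR (l j + 1)) k
          = / ln beta * (sum_f_R0 (fun j => INR (l j + 1)) k * ln beta) by field; lra.
rewrite trials_mul_ln_beta.
have -> : forall a b c, / ln beta * (2 * a * ln beta + b - c) = 2 * a + / ln beta * (b - c)
  by move=> a b c; field; lra.
apply: Rplus_le_compat_l; apply: Rmult_le_compat_neg_l.
- by left; apply: Rinv_lt_0_compat.
- lra.
Qed.

End Backtracking.

Theorem theorem1
  (X : Hilbert) (f : X -> R) (g : X -> X) (Hgrad : is_gradient f g)
  (L : R) (HA1 : lipschitz g L)
  (c1 c2 : R) (Hc1 : 0 < c1) (Hc2 : 0 < c2)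
  (alpha0 beta rho : R) (Ha0 : 0 < alpha0)
  (Hbeta : 0 < beta < 1) (Hrho : 0 < rho < 1)
  (x d : nat -> X) (alpha : nat -> R) (l : nat -> nat) (nu : nat -> nat -> R)
  (Hnu : forall k j, 0 <= nu k j)
  (Halpha0 : alpha 0%nat = alpha0)
  (Hdesc : forall k, hinner (g (x k)) (d k) < 0)
  (HA3a : forall k, hinner (g (x k)) (d k) <= - c1 * (hnorm (g (x k))) ^ 2)
  (HA3b : forall k, hnorm (d k) <= c2 * hnorm (g (x k)))
  (Hacc : forall k,
     f (hadd (x k) (hscal (alpha k * beta ^ (l k)) (d k)))
       <= f (x k) + rho * (alpha k * beta ^ (l k)) * hinner (g (x k)) (d k) + nu k (l k))
  (Hfirst : forall k j, (j < l k)%nat ->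
     ~ (f (hadd (x k) (hscal (alpha k * beta ^ j) (d k)))
          <= f (x k) + rho * (alpha k * beta ^ j) * hinner (g (x k)) (d k) + nu k j))
  (Hx : forall k, x (S k) = hadd (x k) (hscal (alpha k * beta ^ (l k)) (d k)))
  (Halpha : forall k, alpha (S k) = alpha k * powerRZ beta (Z.of_nat (l k) - 1)) :
  forall k : nat,
    sum_f_R0 (fun j => INR (l j + 1)) k
      <= 2 * (INR k + 1)
         + / ln beta * (ln (Rmin alpha0 (2 * (1 - rho) * c1 / (L * c2 ^ 2))) - ln alpha0).
Proof.
(* only the step-size recursion and the rejection of the trial steps matter *)
have [hL _] := HA1.
have hA : 0 < 2 * (1 - rho) * c1 / (L * c2 ^ 2).
{ apply: Rdiv_lt_0_compat; first nra.
  by apply: Rmult_lt_0_compat => //; apply: pow_lt. }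
have ha0 : 0 < alpha 0%nat by rewrite Halpha0.
rewrite -Halpha0; apply: (trials_bound beta alpha l) => // k j hj.
apply: Rnot_le_lt => hsmall; apply: (Hfirst k j hj).
apply: (armijo_small_step X f g Hgrad L HA1) => //; try lra.
apply: Rmult_lt_0_compat; first exact: (alpha_pos beta alpha l).
by apply: pow_lt; lra.
Qed.
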